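(* For real $J_1,J_2,J_3$, the vertex model on the periodic honeycomb lattice with the signature $$(r(000),\dots,r(111))=\big(e^{2(J_1+J_2+J_3)},e^{2J_3},e^{2J_2},e^{2J_1},e^{2J_1},e^{2J_2},e^{2J_3},e^{2(J_1+J_2+J_3)}\big)$$ at every vertex is orthogonally realizable.
   Context: Signatures are indexed by local configurations $000,001,\dots,111$ of the incident $(a,b,c)$-edges. A realization assigns to each edge an invertible $2\times2$ matrix $T_e$ and to each vertex a matchgate signature $m_v$ with $m_v=(T_a\otimes T_b\otimes T_c)r_v$ at black and $m_v=((T_a\otimes T_b\otimes T_c)^t)^{-1}r_v$ at white vertices, each $m_v$ satisfying the parity constraint (vanishing on all binary strings of one parity); the model is orthogonally realizable if a realization exists with all $T_e$ orthogonal. *)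

From Stdlib Require Import Reals Arith Bool.
Open Scope R_scope.

(* A 2x2 real matrix, entries indexed by bits (false = 0, true = 1). *)
Definition mat2 := bool -> bool -> R.
(* A signature on a degree-3 vertex: r x_a x_b x_c, i.e. r(x_a x_b x_c). *)
Definition sig3 := bool -> bool -> bool -> R.

Definition bsum (f : bool -> R) : R := f false + f true.

Definition tensor3 (A B C : mat2) (r : sig3) : sig3 :=
  fun x y z => bsum (fun u => bsum (fun v => bsum (fun w =>
    A x u * B y v * C z w * r u v w))).

Definition det2 (A : mat2) : R :=
  A false false * A true true - A false true * A true false.

Definition invertible2 (A : mat2) : Prop := det2 A <> 0.

(* (A^t)^{-1}, written out for 2x2 matrices. Since
   ((A (x) B (x) C)^t)^{-1} = (A^t)^{-1} (x) (B^t)^{-1} (x) (C^t)^{-1},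
   this gives the white-vertex transformation. *)
Definition inv_transpose2 (A : mat2) : mat2 :=
  fun i j => (if Bool.eqb i j then A (negb i) (negb j)
              else - A (negb i) (negb j)) / det2 A.

Definition orthogonal2 (A : mat2) : Prop :=
  forall i j, bsum (fun k => A k i * A k j) = if Bool.eqb i j then 1 else 0.

Definition parity_ok (s : sig3) : Prop :=
  exists p : bool, forall x y z, xorb (xorb x y) z = p -> s x y z = 0.

(* Periodic honeycomb lattice with m x n fundamental cells (on a torus).
   Black vertices B(i,j), white vertices W(i,j), 0 <= i < m, 0 <= j < n.
   Edges: a(i,j) = B(i,j)--W(i,j), b(i,j) = B(i,j)--W(i+1,j),
          c(i,j) = B(i,j)--W(i,j+1)   (indices mod m, mod n).
   So B(i,j) has incident edges a(i,j), b(i,j), c(i,j) and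
   W(i,j) has incident edges a(i,j), b(i-1,j), c(i,j-1). *)
Definition prevmod (m i : nat) : nat := ((i + (m - 1)) mod m)%nat.

(* Ta i j, Tb i j, Tc i j are the matrices on edges a(i,j), b(i,j), c(i,j);
   rB i j / rW i j are the signatures at B(i,j) / W(i,j). *)
Definition realization (m n : nat) (rB rW : nat -> nat -> sig3)
  (Ta Tb Tc : nat -> nat -> mat2) : Prop :=
  (forall i j, (i < m)%nat -> (j < n)%nat ->
     invertible2 (Ta i j) /\ invertible2 (Tb i j) /\ invertible2 (Tc i j)) /\
  (forall i j, (i < m)%nat -> (j < n)%nat ->
     parity_ok (tensor3 (Ta i j) (Tb i j) (Tc i j) (rB i j))) /\
  (forall i j, (i < m)%nat -> (j < n)%nat ->
     parity_ok (tensor3 (inv_transpose2 (Ta i j))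
                        (inv_transpose2 (Tb (prevmod m i) j))
                        (inv_transpose2 (Tc i (prevmod n j))) (rW i j))).

Definition orthogonally_realizable (m n : nat) (rB rW : nat -> nat -> sig3) : Prop :=
  exists Ta Tb Tc : nat -> nat -> mat2,
    realization m n rB rW Ta Tb Tc /\
    (forall i j, (i < m)%nat -> (j < n)%nat ->
       orthogonal2 (Ta i j) /\ orthogonal2 (Tb i j) /\ orthogonal2 (Tc i j)).

Definition ising_sig (J1 J2 J3 : R) : sig3 :=
  fun x y z =>
    match x, y, z with
    | false, false, false => exp (2 * (J1 + J2 + J3))
    | false, false, true  => exp (2 * J3)
    | false, true,  false => exp (2 * J2)
    | false, true,  true  => exp (2 * J1)
    | true,  false, false => exp (2 * J1)
    | true,  false, true  => exp (2 * J2)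
    | true,  true,  false => exp (2 * J3)
    | true,  true,  true  => exp (2 * (J1 + J2 + J3))
    end.

(* The Ising signature is invariant under the global flip of its three bits.
   The Hadamard matrix conjugates the bit flip X into the phase Z, so
   H (x) H (x) H turns the flip-invariant signature into an eigenvector of
   Z (x) Z (x) Z for the eigenvalue 1, i.e. a signature vanishing on strings of
   odd weight.  The normalized Hadamard matrix is orthogonal and
   (H^t)^{-1} = H, so putting it on every edge realizes the model at black and
   white vertices alike. *)
From Stdlib Require Import Reals Arith Bool Lra FunctionalExtensionality.
Open Scope R_scope.

Definition flip_invariant (r : sig3) : Prop :=
  forall x y z, r x y z = r (negb x) (negb y) (negb z).

Definition hadamard (a : R) : mat2 := fun i j => if i && j then - a else a.

Lemma det2_hadamard (a : R) : det2 (hadamard a) = - (2 * a * a).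
Proof. unfold det2, hadamard; simpl; ring. Qed.

Lemma invertible2_hadamard (a : R) : a <> 0 -> invertible2 (hadamard a).
Proof.
  intro a_neq0; unfold invertible2; rewrite det2_hadamard.
  intro det0; apply a_neq0; nra.
Qed.

Lemma orthogonal2_hadamard (a : R) : 2 * a * a = 1 -> orthogonal2 (hadamard a).
Proof.
  intros a_unit i j; destruct i, j; unfold bsum, hadamard; simpl; lra.
Qed.

Lemma inv_transpose2_hadamard (a : R) :
  a <> 0 -> inv_transpose2 (hadamard a) = hadamard (/ (2 * a)).
Proof.
  intro a_neq0; extensionality i; extensionality j.
  unfold inv_transpose2; rewrite det2_hadamard.
  destruct i, j; unfold hadamard; simpl; field; exact a_neq0.
Qed.

Lemma parity_ok_hadamard (a : R) (r : sig3) :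
  flip_invariant r -> parity_ok (tensor3 (hadamard a) (hadamard a) (hadamard a) r).
Proof.
  intro r_flip; exists true; intros x y z odd_xyz.
  destruct x, y, z; simpl in odd_xyz; try discriminate;
  unfold tensor3, bsum, hadamard; simpl;
  rewrite (r_flip true true true), (r_flip true true false),
    (r_flip true false true), (r_flip false true true); simpl; ring.
Qed.

Lemma ising_sig_flip_invariant (J1 J2 J3 : R) : flip_invariant (ising_sig J1 J2 J3).
Proof. intros x y z; destruct x, y, z; reflexivity. Qed.

Definition hadamard_unit : mat2 := hadamard (/ sqrt 2).

Lemma hadamard_unit_scale : 2 * / sqrt 2 * / sqrt 2 = 1.
Proof.
  rewrite Rmult_assoc, <- Rinv_mult, sqrt_sqrt by lra; field.
Qed.

Lemma hadamard_unit_neq0 : / sqrt 2 <> 0.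
Proof. apply Rinv_neq_0_compat, Rgt_not_eq, sqrt_lt_R0; lra. Qed.

Lemma inv_transpose2_hadamard_unit : inv_transpose2 hadamard_unit = hadamard_unit.
Proof.
  unfold hadamard_unit; rewrite inv_transpose2_hadamard by exact hadamard_unit_neq0.
  f_equal; rewrite Rinv_mult, Rinv_inv, <- (sqrt_sqrt 2) at 1 by lra; field.
  apply Rgt_not_eq, sqrt_lt_R0; lra.
Qed.

Theorem mainTheorem17 (J1 J2 J3 : R) (m n : nat) (hm : (0 < m)%nat) (hn : (0 < n)%nat) :
  orthogonally_realizable m n (fun _ _ => ising_sig J1 J2 J3) (fun _ _ => ising_sig J1 J2 J3).
Proof.
  exists (fun _ _ => hadamard_unit), (fun _ _ => hadamard_unit),
    (fun _ _ => hadamard_unit).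
  pose proof (invertible2_hadamard _ hadamard_unit_neq0) as H_invertible.
  pose proof (orthogonal2_hadamard _ hadamard_unit_scale) as H_orthogonal.
  pose proof (parity_ok_hadamard (/ sqrt 2) _ (ising_sig_flip_invariant J1 J2 J3))
    as H_parity.
  repeat split; intros; try assumption.
  rewrite inv_transpose2_hadamard_unit; exact H_parity.
Qed.
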